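(* Let $P \subset \mathbb{R}^2$ be a finite point set satisfying the standing condition, $\varepsilon \in (0,1)$, and let $S$ and the directed graph $G$ be as defined in the context. Then: (i) if $C$ is a directed cycle of $G$, then the set $Q$ of vertices of $C$ is an $\varepsilon$-regret set of $P$; (ii) if $Q$ is a locally minimal $\varepsilon$-regret set of $P$, then there exists a directed cycle $C$ of $G$ whose vertex set is $Q$.
   Context: For finite $Q \subset \mathbb{R}^2$ and unit $x$, $\omega(x,Q)=\max_{p\in Q}\langle p,x\rangle$. Standing condition: $\omega(x,P)>0$ for all $x\in\mathbb{S}^1$. Regret ratio $l_x(Q) = 1-\omega(x,Q)/\omega(x,P)$, maximum regret ratio $l(Q)=\max_{x\in\mathbb{S}^1} l_x(Q)$; $Q\subseteq P$ is an $\varepsilon$-regret set if $l(Q)\le\varepsilon$. $Q$ is a locally minimal $\varepsilon$-regret set if it is an $\varepsilon$-regret set and $Q\setminus\{q\}$ is not an $\varepsilon$-regret set for any $q \in Q$. The Voronoi cell of $p$ is $R(p)=\{x\neq 0 : \langle p,x\rangle\ge\omega(x,P)\}$; the extreme points $X=\{t_1,\dots,t_m\}$ are the points with $R(p)\neq\varnothing$ (the convex hull vertices), indexed counterclockwise by polar angle, cyclically. For each $i$, $x^*_i\in\mathbb{S}^1$ is the unit vector with $\langle t_i,x\rangle=\langle t_{i+1},x\rangle$ and $\langle t_i,x\rangle>0$. Candidate set: $S = X\cup\{p\in P\setminus X : \exists i,\ \langle p,x^*_i\rangle\ge(1-\varepsilon)\langle t_i,x^*_i\rangle\}$, indexed $s_1,\dots,s_{|S|}$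 counterclockwise by polar angle. For points $a,b$, $X[a,b]$ denotes the extreme points whose polar angles lie in the counterclockwise angular range from the angle of $a$ to the angle of $b$ (inclusive, wrapping through $2\pi$ if needed). The directed graph $G$ has vertex set $S$, and for $i\neq j$ there is an edge $s_i\to s_j$ iff the counterclockwise angle from $s_i$ to $s_j$ is less than $\pi$ and $l_{ij}\le\varepsilon$, where $l_{ij}=\max_{t\in X[s_i,s_j]}\bigl(1-\langle s_i,x^*\rangle/\langle t,x^*\rangle\bigr)$ (taken as $0$ if $X[s_i,s_j]$ is empty) and $x^*\in\mathbb{S}^1$ is the unit vector with $\langle s_i,x^*\rangle=\langle s_j,x^*\rangle$ and $\langle s_i,x^*\rangle\ge 0$. *)

From mathcomp Require Import all_boot all_order all_algebra.
From mathcomp Require Import all_classical all_reals all_analysis.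
Set Implicit Arguments. Unset Strict Implicit. Unset Printing Implicit Defensive.
Import Order.TTheory GRing.Theory Num.Theory.
Local Open Scope ring_scope.

Section Defs.
Variable R : realType.
Local Notation pt := (R * R)%type.

Definition dot (p x : pt) : R := p.1 * x.1 + p.2 * x.2.
Definition vnorm (p : pt) : R := Num.sqrt (p.1 ^+ 2 + p.2 ^+ 2).
Definition unitv (x : pt) : Prop := x.1 ^+ 2 + x.2 ^+ 2 = 1.

(* maximum of a finite sequence of reals (0 for the empty sequence) *)
Definition maxseq (s : seq R) : R := foldr Num.max (head 0 s) s.

Definition omega (x : pt) (Q : seq pt) : R := maxseq [seq dot q x | q <- Q].

Definition standing (P : seq pt) : Prop :=
  forall x, unitv x -> 0 < omega x P.

Definition regret_x (P Q : seq pt) (x : pt) : R := 1 - omega x Q / omega x P.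

Definition regret_set (P Q : seq pt) (eps : R) : Prop :=
  {subset Q <= P} /\ forall x, unitv x -> regret_x P Q x <= eps.

Definition locally_minimal (P Q : seq pt) (eps : R) : Prop :=
  regret_set P Q eps /\
  forall q, q \in Q -> ~ regret_set P [seq p <- Q | p != q] eps.

Definition voronoi (P : seq pt) (p x : pt) : Prop :=
  x != 0 /\ omega x P <= dot p x.
Definition extreme (P : seq pt) (p : pt) : Prop :=
  p \in P /\ exists x, voronoi P p x.

Definition polar_angle (p : pt) : R :=
  if 0 <= p.2 then acos (p.1 / vnorm p) else 2 * pi - acos (p.1 / vnorm p).

Definition ccw_angle (a b : pt) : R :=
  let d := polar_angle b - polar_angle a in
  if 0 <= d then d else d + 2 * pi.

(* t' = t_{i+1} is the counterclockwise successor of t = t_i among the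
   extreme points (cyclically) *)
Definition consecutive (P : seq pt) (t t' : pt) : Prop :=
  [/\ extreme P t, extreme P t', t != t' &
      forall u, extreme P u -> u != t -> ccw_angle t t' <= ccw_angle t u].

Definition xstar (t t' x : pt) : Prop :=
  [/\ unitv x, dot t x = dot t' x & 0 < dot t x].

Definition candidate (P : seq pt) (eps : R) (p : pt) : Prop :=
  p \in P /\
  (extreme P p \/
   exists t t' x, [/\ consecutive P t t', xstar t t' x &
                      (1 - eps) * dot t x <= dot p x]).

Definition in_range (P : seq pt) (a b t : pt) : Prop :=
  extreme P t /\ ccw_angle a t <= ccw_angle a b.

Definition lij (P : seq pt) (a b x : pt) : R :=
  maxseq [seq 1 - dot a x / dot t x | t <- [seq t <- undup P | `[< in_range P a b t >]]].

Definition edge (P : seq pt) (eps : R) (a b : pt) : Prop :=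
  [/\ candidate P eps a, candidate P eps b, a != b,
      ccw_angle a b < pi &
      exists x, [/\ unitv x, dot a x = dot b x, 0 <= dot a x &
                    lij P a b x <= eps]].

Definition dcycle (P : seq pt) (eps : R) (c : seq pt) : Prop :=
  [/\ c != [::], uniq c &
      forall i, (i < size c)%N ->
        edge P eps (nth 0 c i) (nth 0 c ((i.+1) %% size c))].

(* distinct points of S have distinct polar angles (implicit in indexing S
   counterclockwise by polar angle) *)
Definition distinct_angles (P : seq pt) (eps : R) : Prop :=
  forall p q, candidate P eps p -> candidate P eps q -> p != q ->
    polar_angle p != polar_angle q.

End Defs.

From mathcomp Require Import all_boot all_order all_algebra.
From mathcomp Require Import all_classical all_reals all_analysis.
From mathcomp Require Import ring lra.
Import Order.TTheory GRing.Theory Num.Theory.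
Local Open Scope ring_scope.
Set Implicit Arguments. Unset Strict Implicit. Unset Printing Implicit Defensive.

(* A direction y is served by the extreme point t of P maximising <., y>.
   (i) The counterclockwise turns along a cycle of G make up whole turns, so t lies
   in the angular range of some edge a -> b, i.e. t = (alpha a + beta b) / cross a b
   with alpha, beta >= 0.  At the normal x* of [a, b] the condition l_ab <= eps reads
   (1 - eps) (alpha + beta) <= cross a b, hence (1 - eps) <t, y> <= max(<a, y>, <b, y>).
   (ii) If q in a locally minimal Q is not a candidate, then (1 - eps) t beats q at the
   normals of both hull edges at t; as <q - (1 - eps) t, .> is linear, it is negative on
   the whole sector between these normals, which contains y.  So Q \ {q} would still be
   an eps-regret set.  Sorted by polar angle, Q is then a cycle of G: a point q of Q
   beating a (and b) at the normal of angularly consecutive a, b would either lie in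
   their wedge, against consecutiveness, or dominate a or b together with the other,
   against minimality. *)

Section RegretCycles.
Variable R : realType.
Local Notation pt := (R * R)%type.
Implicit Types (P Q c : seq pt) (a b p q t u v w x y z : pt) (eps : R).

Definition cross a b : R := a.1 * b.2 - a.2 * b.1.
Definition norm2 p : R := p.1 ^+ 2 + p.2 ^+ 2.

Lemma norm2_ge0 p : 0 <= norm2 p.
Proof. rewrite /norm2; nra. Qed.

Lemma norm2_gt0 p : (0 < norm2 p) = (p != 0).
Proof.
case: p => p1 p2; rewrite /norm2 /=; apply/idP/idP => [|nz].
  by apply: contraTneq => -[-> ->]; rewrite expr0n addr0 ltxx.
rewrite lt_neqAle addr_ge0 ?sqr_ge0 // andbT; apply: contra nz => /eqP/esym sum0.
by have [-> ->] : p1 = 0 /\ p2 = 0 by split; nra.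
Qed.

Lemma dot_norm2 p : dot p p = norm2 p.
Proof. by rewrite /dot /norm2 !expr2. Qed.

Lemma norm2_gt0_dot t x : dot t x != 0 -> 0 < norm2 t.
Proof.
apply: contraNT; rewrite -leNgt => t_le0.
have [t1 t2] : t.1 = 0 /\ t.2 = 0 by move: t_le0 (norm2_ge0 t); rewrite /norm2; nra.
by rewrite /dot t1 t2 !mul0r addr0.
Qed.

Definition rot90 a : pt := (- a.2, a.1).

Lemma dot_rot90 a p : dot p (rot90 a) = cross a p.
Proof. rewrite /dot /cross /=; ring. Qed.

Lemma norm2_rot90 a : norm2 (rot90 a) = norm2 a.
Proof. by rewrite /norm2 /= sqrrN addrC. Qed.

Lemma cone_dot a b t x :
  cross a b * dot t x = cross t b * dot a x + cross a t * dot b x.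
Proof. rewrite /cross /dot; ring. Qed.

Lemma norm2_cross_dot a b x :
  norm2 x * cross a b = dot a x * cross x b - dot b x * cross x a.
Proof. rewrite /cross /dot /norm2; ring. Qed.

Lemma foldr_max_ge (d r : R) s : r \in s -> r <= foldr Num.max d s.
Proof.
elim: s => //= r' s IH; rewrite inE le_max.
by case/orP=> [/eqP->|/IH->]; rewrite ?lexx ?orbT.
Qed.

Lemma foldr_max_mem (d : R) s : foldr Num.max d s \in d :: s.
Proof.
elim: s => /= [|r s IH]; first exact: mem_head.
rewrite maxEle; case: ifP => _; last by rewrite !inE eqxx orbT.
by move: IH; rewrite !inE => /orP[->|->]; rewrite ?orbT.
Qed.

Lemma maxseq_ge (s : seq R) (r : R) : r \in s -> r <= maxseq s.
Proof. exact: foldr_max_ge. Qed.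

Lemma maxseq_mem (s : seq R) : s != [::] -> maxseq s \in s.
Proof.
case: s => // r s _; have := foldr_max_mem r (r :: s).
by rewrite /maxseq /= inE => /orP[/eqP->|]; rewrite ?mem_head.
Qed.

Lemma maxseq_le (s : seq R) (e : R) :
  0 <= e -> (forall r, r \in s -> r <= e) -> maxseq s <= e.
Proof. by case: s => // r s _ le_e; apply/le_e/maxseq_mem. Qed.

Lemma omega_ge Q p x : p \in Q -> dot p x <= omega x Q.
Proof. by move=> pQ; apply/maxseq_ge/map_f. Qed.

Lemma omega_mem Q x : Q != [::] -> exists2 p, p \in Q & omega x Q = dot p x.
Proof.
move=> Q0; have /mapP[p pQ ->] : omega x Q \in [seq dot q x | q <- Q].
  by apply: maxseq_mem; case: Q Q0.
by exists p.
Qed.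

Definition scale (k : R) x : pt := (k * x.1, k * x.2).

Lemma dot_scale p (k : R) x : dot p (scale k x) = k * dot p x.
Proof. rewrite /dot /=; ring. Qed.

Lemma omega_scale Q (k : R) x : 0 < k -> omega (scale k x) Q = k * omega x Q.
Proof.
move=> k_gt0; have [->|Q0] := eqVneq Q [::]; first by rewrite /omega /= mulr0.
apply/eqP; rewrite eq_le; apply/andP; split.
  by have [p pQ ->] := omega_mem (scale k x) Q0; rewrite dot_scale ler_pM2l ?omega_ge.
by have [p pQ ->] := omega_mem x Q0; rewrite -dot_scale omega_ge.
Qed.

Lemma vnorm_gt0 p : 0 < norm2 p -> 0 < vnorm p.
Proof. by rewrite /vnorm sqrtr_gt0. Qed.

Lemma sqr_vnorm p : vnorm p ^+ 2 = norm2 p.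
Proof. by rewrite /vnorm sqr_sqrtr // norm2_ge0. Qed.

Definition normalize z : pt := scale (vnorm z)^-1 z.

Lemma unitv_normalize z : 0 < norm2 z -> unitv (normalize z).
Proof.
move=> z_gt0; rewrite /unitv /= !exprMn -mulrDr -/(norm2 z) -sqr_vnorm -exprMn.
by rewrite mulVf ?expr1n // gt_eqF ?vnorm_gt0.
Qed.

Lemma scale_normalize z : 0 < norm2 z -> scale (vnorm z) (normalize z) = z.
Proof.
move=> /vnorm_gt0 /lt0r_neq0 nz; rewrite /normalize /scale /= !mulrA divff // !mul1r.
by case: z {nz}.
Qed.

Lemma omega_normalize Q z : 0 < norm2 z -> omega z Q = vnorm z * omega (normalize z) Q.
Proof. by move=> z_gt0; rewrite -omega_scale ?vnorm_gt0 // scale_normalize. Qed.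

Lemma standing_omega_gt0 P z : standing P -> 0 < norm2 z -> 0 < omega z P.
Proof.
move=> sP z_gt0; rewrite omega_normalize // mulr_gt0 ?vnorm_gt0 //.
exact/sP/unitv_normalize.
Qed.

Lemma one_sub_div_le (r s eps : R) : 0 < s -> (1 - r / s <= eps) = ((1 - eps) * s <= r).
Proof. by move=> s_gt0; rewrite -ler_pdivlMr //; apply/idP/idP; lra. Qed.

Lemma regret_x_le P Q eps x : 0 < omega x P ->
  (regret_x P Q x <= eps) = ((1 - eps) * omega x P <= omega x Q).
Proof. exact: one_sub_div_le. Qed.

Lemma regret_setP P Q eps : standing P ->
  regret_set P Q eps <->
  {subset Q <= P} /\ forall z, 0 < norm2 z -> (1 - eps) * omega z P <= omega z Q.
Proof.
move=> sP; split=> -[QP regQ]; split=> // z.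
  move=> z_gt0; rewrite !(omega_normalize _ z_gt0) mulrCA ler_pM2l ?vnorm_gt0 //.
  have zu := unitv_normalize z_gt0.
  by rewrite -regret_x_le ?regQ ?sP.
have z_gt0 : unitv z -> 0 < norm2 z by rewrite /unitv /norm2 => ->.
by move=> zu; rewrite regret_x_le ?regQ ?sP ?z_gt0.
Qed.

Lemma regret_set_dot_gt0 P Q eps z : standing P -> eps < 1 -> regret_set P Q eps ->
  0 < norm2 z -> exists2 q, q \in Q & 0 < dot q z.
Proof.
move=> sP eps_lt1 /(regret_setP _ _ sP) [_ regQ] z_gt0.
have Qz_gt0 : 0 < omega z Q.
  apply: lt_le_trans (regQ _ z_gt0); rewrite mulr_gt0 ?standing_omega_gt0 //; lra.
have Q0 : Q != [::] by apply: contraTneq Qz_gt0 => ->; rewrite ltxx.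
by have [q qQ Qq] := omega_mem z Q0; exists q; rewrite // -Qq.
Qed.

Lemma regret_set_left P Q eps a : standing P -> eps < 1 -> regret_set P Q eps ->
  0 < norm2 a -> exists2 p, p \in Q & 0 < cross a p.
Proof.
move=> sP eps_lt1 regQ; rewrite -norm2_rot90 => /(regret_set_dot_gt0 sP eps_lt1 regQ).
by case=> p pQ; rewrite dot_rot90; exists p.
Qed.

(** * Polar and counterclockwise angles *)

Lemma cos_polar_bounds p : -1 <= p.1 / vnorm p <= 1.
Proof.
have [p0|p_gt0] : norm2 p = 0 \/ 0 < norm2 p.
  by have := norm2_ge0 p; rewrite le_eqVlt => /orP[/eqP<-|->]; [left|right].
  by rewrite /vnorm -/(norm2 p) p0 sqrtr0 invr0 mulr0; lra.
have : (p.1 / vnorm p) ^+ 2 <= 1.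
  rewrite expr_div_n sqr_vnorm ler_pdivrMr // mul1r /norm2.
  by have := sqr_ge0 p.2; lra.
move=> le1; apply/andP; split; nra.
Qed.

Lemma polar_angle_bounds p : 0 <= polar_angle p /\ polar_angle p < 2 * pi.
Proof.
have bnd := cos_polar_bounds p; have pi_gt0 := pi_gt0 R.
have acos_le := acos_lepi bnd; have acos_ge := acos_ge0 bnd.
rewrite /polar_angle; case: (lerP 0 p.2) => p2; split; try lra.
suff : 0 < acos (p.1 / vnorm p) by lra.
have p_gt0 : 0 < norm2 p by rewrite /norm2; nra.
apply: acos_gt0; case/andP: bnd => -> /= le1; rewrite lt_neqAle le1 andbT.
apply/eqP => p1.
have : p.1 = vnorm p by rewrite -[LHS](divfK (lt0r_neq0 (vnorm_gt0 p_gt0))) p1 mul1r.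
by have := sqr_vnorm p; rewrite /norm2 => + e; rewrite -e; nra.
Qed.

Lemma cos_polar_angle p : cos (polar_angle p) = p.1 / vnorm p.
Proof.
have cosK : cos (acos (p.1 / vnorm p)) = p.1 / vnorm p.
  by apply: acosK; rewrite in_itv /= cos_polar_bounds.
by rewrite /polar_angle; case: ifP => _; rewrite // mulr_natl addrC cosD2pi cosN.
Qed.

Lemma sin_polar_angle p : 0 < norm2 p -> sin (polar_angle p) = p.2 / vnorm p.
Proof.
move=> p_gt0; have bnd := cos_polar_bounds p; have n_gt0 := vnorm_gt0 p_gt0.
have sin2 : 1 - (p.1 / vnorm p) ^+ 2 = (p.2 / vnorm p) ^+ 2.
  by rewrite !expr_div_n sqr_vnorm /norm2; field; rewrite -/(norm2 p) lt0r_neq0.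
rewrite /polar_angle; case: (lerP 0 p.2) => p2.
  by rewrite sin_acos // sin2 sqrtr_sqr ger0_norm // divr_ge0 // ltW.
rewrite mulr_natl addrC sinD2pi sinN sin_acos // sin2 sqrtr_sqr ltr0_norm ?opprK //.
by rewrite pmulr_llt0 // invr_gt0.
Qed.

Lemma cross_sin_ccw_angle a b : 0 < norm2 a -> 0 < norm2 b ->
  cross a b = vnorm a * vnorm b * sin (ccw_angle a b).
Proof.
move=> a_gt0 b_gt0; have na := vnorm_gt0 a_gt0; have nb := vnorm_gt0 b_gt0.
have sinB : sin (polar_angle b - polar_angle a) = cross a b / (vnorm a * vnorm b).
  rewrite sinB !cos_polar_angle !sin_polar_angle // /cross; field.
  by rewrite !lt0r_neq0.
suff -> : sin (ccw_angle a b) = cross a b / (vnorm a * vnorm b).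
  by rewrite mulrC divfK // lt0r_neq0 ?mulr_gt0.
by rewrite /ccw_angle; case: ifP => _; rewrite ?mulr_natl ?sinD2pi.
Qed.

Lemma ccw_angle_cases a b :
  (polar_angle a <= polar_angle b /\ ccw_angle a b = polar_angle b - polar_angle a) \/
  (polar_angle b < polar_angle a /\
   ccw_angle a b = polar_angle b - polar_angle a + 2 * pi).
Proof. by rewrite /ccw_angle subr_ge0; case: lerP => ?; [left|right]. Qed.

Lemma ccw_angle_bounds a b : 0 <= ccw_angle a b /\ ccw_angle a b < 2 * pi.
Proof.
have [? ?] := polar_angle_bounds a; have [? ?] := polar_angle_bounds b.
by case: (ccw_angle_cases a b) => -[? ->]; split; lra.
Qed.

Lemma ccw_angle_eq0 a b : ccw_angle a b = 0 -> polar_angle a = polar_angle b.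
Proof.
have [? ?] := polar_angle_bounds a; have [? ?] := polar_angle_bounds b.
by case: (ccw_angle_cases a b) => -[? ->]; lra.
Qed.

Lemma ccw_angle_inj a b q :
  ccw_angle a q = ccw_angle a b -> polar_angle q = polar_angle b.
Proof.
have [? ?] := polar_angle_bounds a; have [? ?] := polar_angle_bounds b.
have [? ?] := polar_angle_bounds q.
move: (ccw_angle_cases a b) (ccw_angle_cases a q).
by move=> [[? ->]|[? ->]] [[? ->]|[? ->]]; lra.
Qed.

Lemma ccw_angleB a b t : ccw_angle a b <= ccw_angle a t ->
  ccw_angle b t = ccw_angle a t - ccw_angle a b.
Proof.
have [? ?] := polar_angle_bounds a; have [? ?] := polar_angle_bounds b.
have [? ?] := polar_angle_bounds t.
move: (ccw_angle_cases a b) (ccw_angle_cases a t) (ccw_angle_cases b t).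
by move=> [[? ->]|[? ->]] [[? ->]|[? ->]] [[? ->]|[? ->]]; lra.
Qed.

Lemma ccw_angle_sym a b : 0 < ccw_angle a b -> ccw_angle b a = 2 * pi - ccw_angle a b.
Proof.
have [? ?] := polar_angle_bounds a; have [? ?] := polar_angle_bounds b.
move: (ccw_angle_cases a b) (ccw_angle_cases b a).
by move=> [[? ->]|[? ->]] [[? ->]|[? ->]]; lra.
Qed.

Lemma sin_gt0_iff (r : R) : 0 <= r < 2 * pi -> (0 < sin r <-> 0 < r < pi).
Proof.
move=> /andP[r_ge0 r_lt]; split; last exact: sin_gt0_pi.
move=> sin_gt0; apply/andP; split.
  by rewrite lt_neqAle r_ge0 andbT; apply: contraTneq sin_gt0 => <-; rewrite sin0 ltxx.
rewrite ltNge; apply/negP => pi_le.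
have : 0 <= sin (r - pi) by apply: sin_ge0_pi; apply/andP; split; lra.
by have := sinDpi (r - pi); rewrite subrK; lra.
Qed.

Lemma sin_ge0_iff (r : R) : 0 <= r < 2 * pi -> (0 <= sin r <-> r <= pi).
Proof.
move=> /andP[r_ge0 r_lt]; split => [sin_ge0|]; last by move=> ?; apply/sin_ge0_pi/andP.
rewrite leNgt; apply/negP => pi_lt.
have : 0 < sin (r - pi) by apply: sin_gt0_pi; apply/andP; split; lra.
by have := sinDpi (r - pi); rewrite subrK; lra.
Qed.

Lemma cross_gt0_ccw a b : 0 < norm2 a -> 0 < norm2 b ->
  0 < cross a b <-> 0 < ccw_angle a b < pi.
Proof.
move=> a_gt0 b_gt0; have [? ?] := ccw_angle_bounds a b.
rewrite cross_sin_ccw_angle // pmulr_rgt0 ?mulr_gt0 ?vnorm_gt0 //.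
by apply: sin_gt0_iff; apply/andP.
Qed.

Lemma cross_ge0_ccw a b : 0 < norm2 a -> 0 < norm2 b ->
  0 <= cross a b <-> ccw_angle a b <= pi.
Proof.
move=> a_gt0 b_gt0; have [? ?] := ccw_angle_bounds a b.
rewrite cross_sin_ccw_angle // pmulr_rge0 ?mulr_gt0 ?vnorm_gt0 //.
by apply: sin_ge0_iff; apply/andP.
Qed.

Lemma ccw_angle_le_wedge a b t : 0 < norm2 a -> 0 < norm2 b -> 0 < norm2 t ->
  0 < cross a b ->
  ccw_angle a t <= ccw_angle a b <-> 0 <= cross a t /\ 0 <= cross t b.
Proof.
move=> a_gt0 b_gt0 t_gt0 /(cross_gt0_ccw a_gt0 b_gt0) /andP[ab_gt0 ab_lt].
rewrite (cross_ge0_ccw a_gt0 t_gt0) (cross_ge0_ccw t_gt0 b_gt0).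
split=> [le_tb|[at_le tb_le]].
  have [? _] := ccw_angle_bounds a t.
  by rewrite (ccw_angleB le_tb); split; lra.
rewrite leNgt; apply/negP => lt_bt.
have bt_gt0 : 0 < ccw_angle b t by rewrite (ccw_angleB (ltW lt_bt)); lra.
by move: tb_le; rewrite (ccw_angle_sym bt_gt0) (ccw_angleB (ltW lt_bt)); lra.
Qed.

(** * Extreme points and candidates *)

Lemma cross_gt0_neq a b : 0 < cross a b -> a != b.
Proof. by apply: contraTneq => ->; rewrite /cross mulrC subrr ltxx. Qed.

Lemma extreme_norm2_gt0 P t : standing P -> extreme P t -> 0 < norm2 t.
Proof.
move=> sP [_ [x [x0 le_x]]]; apply: (@norm2_gt0_dot _ x).
suff : 0 < dot t x by move/gt_eqF->.
by apply: lt_le_trans le_x; rewrite standing_omega_gt0 // norm2_gt0.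
Qed.

Lemma candidate_norm2_gt0 P eps p : standing P -> eps < 1 -> candidate P eps p ->
  0 < norm2 p.
Proof.
move=> sP eps_lt1 [_ [/(extreme_norm2_gt0 sP) //|[t [t' [x [_ [_ _ tx_gt0] le_px]]]]]].
apply: (@norm2_gt0_dot _ x); rewrite gt_eqF //; apply: lt_le_trans le_px.
by rewrite mulr_gt0 // subr_gt0.
Qed.

Lemma extreme_candidate P eps p : extreme P p -> candidate P eps p.
Proof. by move=> [pP ?]; split=> //; left. Qed.

Lemma candidate_ccw_angle_gt0 P eps a b : distinct_angles P eps ->
  candidate P eps a -> candidate P eps b -> a != b -> 0 < ccw_angle a b.
Proof.
move=> dP ca cb ab; have [ge0 _] := ccw_angle_bounds a b.
rewrite lt_neqAle ge0 andbT; apply/eqP => /esym/ccw_angle_eq0 e.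
by move: (dP _ _ ca cb ab); rewrite e eqxx.
Qed.

Lemma extreme_argmax P z : standing P -> 0 < norm2 z ->
  exists t, extreme P t /\ omega z P = dot t z.
Proof.
move=> sP z_gt0; have Pz_gt0 := standing_omega_gt0 sP z_gt0.
have P0 : P != [::] by apply: contraTneq Pz_gt0 => ->; rewrite ltxx.
have [t tP e] := omega_mem z P0.
by exists t; split=> //; split=> //; exists z; split; rewrite ?e // -norm2_gt0.
Qed.

Lemma extreme_left P t : standing P -> 0 < norm2 t ->
  exists u, extreme P u /\ 0 < cross t u.
Proof.
move=> sP; rewrite -norm2_rot90 => z_gt0.
have [u [eu e]] := extreme_argmax sP z_gt0.
by exists u; split=> //; rewrite -dot_rot90 -e standing_omega_gt0.
Qed.

Lemma extreme_right P t : standing P -> 0 < norm2 t ->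
  exists u, extreme P u /\ 0 < cross u t.
Proof.
move=> sP t_gt0; have z_gt0 : 0 < norm2 (t.2, - t.1) by rewrite /norm2 /= sqrrN addrC.
have [u [eu e]] := extreme_argmax sP z_gt0.
have := standing_omega_gt0 sP z_gt0; rewrite e /dot /cross /=.
by exists u; split=> //; lra.
Qed.

Lemma exists_seq_argmin (T : eqType) (s : seq T) (f : T -> R) : s != [::] ->
  exists2 m, m \in s & forall r : T, r \in s -> f m <= f r.
Proof.
elim: s => [//|x s IH] _; have [->|/IH[m ms min_m]] := eqVneq s [::].
  by exists x; rewrite ?mem_head // => v; rewrite inE => /eqP->.
have [le_xm|lt_mx] := lerP (f x) (f m).
  exists x; first exact: mem_head.
  by move=> v; rewrite inE => /orP[/eqP->//|/min_m]; apply: le_trans.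
exists m; first by rewrite inE ms orbT.
by move=> v; rewrite inE => /orP[/eqP->|/min_m//]; apply: ltW.
Qed.

Lemma extreme_argmin P t (f : pt -> R) : standing P -> extreme P t ->
  exists2 m, extreme P m /\ m != t & forall u, extreme P u -> u != t -> f m <= f u.
Proof.
move=> sP et; pose E := [seq u <- P | `[< extreme P u /\ u != t >]].
have memE u : u \in E = `[< extreme P u /\ u != t >].
  by rewrite mem_filter andb_idr // => /asboolP[[uP _] _].
have [u [eu /cross_gt0_neq tu]] := extreme_left sP (extreme_norm2_gt0 sP et).
have uE : u \in E by rewrite memE; apply/asboolP; rewrite eq_sym.
have E0 : E != [::] by apply: contraTneq uE => ->.
have [m] := exists_seq_argmin f E0; rewrite memE => /asboolP em min_m.
by exists m => // v ev vt; apply: min_m; rewrite memE; apply/asboolP.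
Qed.

Lemma extreme_succ P eps t : standing P -> distinct_angles P eps -> extreme P t ->
  exists t', consecutive P t t' /\ 0 < cross t t'.
Proof.
move=> sP dP et; have t_gt0 := extreme_norm2_gt0 sP et.
have [t' [et' t't] min_t'] := extreme_argmin (ccw_angle t) sP et.
exists t'; split; first by split=> //; rewrite eq_sym.
have [u [eu tu_gt0]] := extreme_left sP t_gt0.
apply/(cross_gt0_ccw t_gt0 (extreme_norm2_gt0 sP et')); apply/andP; split.
  apply: (candidate_ccw_angle_gt0 dP); rewrite 1?eq_sym //;
    exact: extreme_candidate.
apply: le_lt_trans (min_t' u eu _) _; first by rewrite eq_sym cross_gt0_neq.
by have /andP[] := (cross_gt0_ccw t_gt0 (extreme_norm2_gt0 sP eu)).1 tu_gt0.
Qed.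

Lemma extreme_pred P eps t : standing P -> distinct_angles P eps -> extreme P t ->
  exists t'', consecutive P t'' t /\ 0 < cross t'' t.
Proof.
move=> sP dP et; have t_gt0 := extreme_norm2_gt0 sP et.
have [t'' [et'' t''t] min_t''] := extreme_argmin (fun v => ccw_angle v t) sP et.
have ccw_gt0 u : extreme P u -> u != t'' -> 0 < ccw_angle t'' u.
  move=> eu ut''; apply: (candidate_ccw_angle_gt0 dP); rewrite 1?eq_sym //;
    exact: extreme_candidate.
exists t''; split.
  split=> // u eu ut''; have [->|ut] := eqVneq u t; first exact: lexx.
  rewrite leNgt; apply/negP => lt_u.
  have := min_t'' u eu ut; rewrite /= (ccw_angleB (ltW lt_u)).
  by have := ccw_gt0 u eu ut''; lra.
have [u [eu ut_gt0]] := extreme_right sP t_gt0.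
apply/(cross_gt0_ccw (extreme_norm2_gt0 sP et'') t_gt0); apply/andP; split.
  by apply: ccw_gt0; rewrite // eq_sym.
apply: le_lt_trans (min_t'' u eu (cross_gt0_neq ut_gt0)) _.
by have /andP[] := (cross_gt0_ccw (extreme_norm2_gt0 sP eu) t_gt0).1 ut_gt0.
Qed.

Definition edge_dir a b : pt := (b.2 - a.2, a.1 - b.1).
Definition edge_normal a b : pt := normalize (edge_dir a b).

Lemma edge_dir_norm2_gt0 a b : 0 < cross a b -> 0 < norm2 (edge_dir a b).
Proof.
move=> ab_gt0; apply: (@norm2_gt0_dot _ a).
by rewrite (_ : dot _ a = cross a b) ?gt_eqF // /dot /cross /=; ring.
Qed.

Lemma xstar_edge_normal a b : 0 < cross a b -> xstar a b (edge_normal a b).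
Proof.
move=> ab_gt0; have w_gt0 := edge_dir_norm2_gt0 ab_gt0.
have aw : dot a (edge_dir a b) = cross a b by rewrite /dot /cross /=; ring.
have bw : dot b (edge_dir a b) = cross a b by rewrite /dot /cross /=; ring.
split; first exact: unitv_normalize.
  by rewrite /edge_normal /normalize !dot_scale aw bw.
by rewrite /edge_normal /normalize dot_scale aw mulr_gt0 // invr_gt0 vnorm_gt0.
Qed.

Lemma cross_edge_normal a b : 0 < cross a b ->
  exists2 k, 0 < k & forall y, cross (edge_normal a b) y = k * (dot b y - dot a y).
Proof.
move=> ab_gt0; exists (vnorm (edge_dir a b))^-1.
  by rewrite invr_gt0 vnorm_gt0 // edge_dir_norm2_gt0.
by move=> y; rewrite /edge_normal /normalize /scale /cross /dot /=; ring.
Qed.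

(** * Cycles of G are regret sets *)

Lemma lij_le P a b x eps : 0 <= eps ->
  lij P a b x <= eps <-> forall t, in_range P a b t -> 1 - dot a x / dot t x <= eps.
Proof.
move=> eps_ge0; split=> [le_eps t rt|le_eps].
  apply: le_trans le_eps; apply/maxseq_ge/map_f.
  have [[tP _] _] := rt.
  by rewrite mem_filter mem_undup tP andbT; apply/asboolP.
apply: maxseq_le => // r /mapP[t]; rewrite mem_filter => /andP[/asboolP rt _] ->.
exact: le_eps.
Qed.

Lemma tie_dot_gt0 a b x : 0 < cross a b -> 0 < norm2 x ->
  dot a x = dot b x -> 0 <= dot a x -> 0 < dot a x.
Proof.
move=> ab_gt0 x_gt0 abx; rewrite le_eqVlt => /orP[/eqP ax0|//].
have := norm2_cross_dot a b x; rewrite -abx -ax0 !mul0r subrr => /eqP.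
by rewrite mulf_eq0 !gt_eqF.
Qed.

Lemma wedge_sum_gt0 a b t : 0 < cross a b -> 0 < norm2 t ->
  0 <= cross a t -> 0 <= cross t b -> 0 < cross t b + cross a t.
Proof.
move=> ab_gt0 t_gt0 at_ge0 tb_ge0; rewrite lt_neqAle addr_ge0 // andbT.
apply/eqP => sum0; have [tb0 at0] : cross t b = 0 /\ cross a t = 0 by split; lra.
have := cone_dot a b t t; rewrite tb0 at0 !mul0r addr0 dot_norm2 => /eqP.
by rewrite mulf_eq0 !gt_eqF.
Qed.

Lemma wedge_dot_gt0 a b t x : 0 < cross a b -> 0 < norm2 t ->
  0 <= cross a t -> 0 <= cross t b -> dot a x = dot b x -> 0 < dot a x -> 0 < dot t x.
Proof.
move=> ab_gt0 t_gt0 at_ge0 tb_ge0 abx ax_gt0.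
have : 0 < cross a b * dot t x.
  by rewrite cone_dot -abx -mulrDl mulr_gt0 ?wedge_sum_gt0.
by rewrite pmulr_rgt0.
Qed.

Lemma in_range_wedge P a b t : standing P -> 0 < norm2 a -> 0 < norm2 b ->
  0 < cross a b -> in_range P a b t -> 0 <= cross a t /\ 0 <= cross t b.
Proof.
move=> sP a_gt0 b_gt0 ab_gt0 [et le_ab].
exact/(ccw_angle_le_wedge a_gt0 b_gt0 (extreme_norm2_gt0 sP et)).
Qed.

Lemma edge_cross_gt0 P eps a b : standing P -> eps < 1 -> distinct_angles P eps ->
  edge P eps a b -> 0 < cross a b.
Proof.
move=> sP eps_lt1 dP [ca cb ab ab_lt _].
have a_gt0 := candidate_norm2_gt0 sP eps_lt1 ca.
have b_gt0 := candidate_norm2_gt0 sP eps_lt1 cb.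
by apply/(cross_gt0_ccw a_gt0 b_gt0); rewrite ab_lt (candidate_ccw_angle_gt0 dP ca cb ab).
Qed.

Lemma edge_wedge_weight P eps a b t : standing P -> 0 < eps < 1 ->
  distinct_angles P eps -> edge P eps a b -> in_range P a b t ->
  (1 - eps) * (cross t b + cross a t) <= cross a b.
Proof.
move=> sP /andP[eps_gt0 eps_lt1] dP eab rt.
have ab_gt0 := edge_cross_gt0 sP eps_lt1 dP eab.
case: eab => ca cb _ _ [x [xu abx ax_ge0 /(lij_le _ _ _ _ (ltW eps_gt0)) lij_eps]].
have x_gt0 : 0 < norm2 x by rewrite /norm2 xu.
have a_gt0 := candidate_norm2_gt0 sP eps_lt1 ca.
have b_gt0 := candidate_norm2_gt0 sP eps_lt1 cb.
have [at_ge0 tb_ge0] := in_range_wedge sP a_gt0 b_gt0 ab_gt0 rt.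
have ax_gt0 := tie_dot_gt0 ab_gt0 x_gt0 abx ax_ge0.
have t_gt0 := extreme_norm2_gt0 sP rt.1.
have tx_gt0 := wedge_dot_gt0 ab_gt0 t_gt0 at_ge0 tb_ge0 abx ax_gt0.
have := lij_eps t rt; rewrite one_sub_div_le // => tx_le.
have e : cross a b * dot t x = (cross t b + cross a t) * dot a x.
  by rewrite cone_dot -abx -mulrDl.
by rewrite -(ler_pM2r ax_gt0) -mulrA -e mulrCA ler_pM2l.
Qed.

Lemma dominated_le (K l m r u v W : R) : 0 < K -> 0 <= l -> 0 <= m -> l + m <= K ->
  K * r = l * u + m * v -> 0 < r -> u <= W -> v <= W -> r <= W.
Proof.
move=> K_gt0 l_ge0 m_ge0 lmK Kr r_gt0 uW vW.
have KrW : K * r <= (l + m) * W by rewrite Kr mulrDl lerD // ler_wpM2l.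
have W_ge0 : 0 <= W.
  rewrite leNgt; apply/negP => W_lt0.
  have : (l + m) * W <= 0 by rewrite mulr_ge0_le0 ?addr_ge0 // ltW.
  by have := mulr_gt0 K_gt0 r_gt0; lra.
by rewrite -(ler_pM2l K_gt0); apply: le_trans KrW (ler_wpM2r W_ge0 lmK).
Qed.

(* Otherwise ccw_angle c`_i t would decrease strictly all around the cycle. *)
Lemma ccw_cycle_cover c t : c != [::] ->
  (forall i, (i < size c)%N -> 0 < ccw_angle c`_i c`_(i.+1 %% size c)) ->
  exists2 i, (i < size c)%N & ccw_angle c`_i t <= ccw_angle c`_i c`_(i.+1 %% size c).
Proof.
set n := size c => c0 step_gt0; have n_gt0 : (0 < n)%N by rewrite lt0n size_eq0.
apply: contrapT => no_i.
have dec i : (i < n)%N -> ccw_angle c`_(i.+1 %% n) t < ccw_angle c`_i t.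
  move=> lt_in; have lt_t : ccw_angle c`_i c`_(i.+1 %% n) < ccw_angle c`_i t.
    by rewrite ltNge; apply/negP => le_t; apply: no_i; exists i.
  by rewrite (ccw_angleB (ltW lt_t)); have := step_gt0 i lt_in; lra.
have dec0 k : (0 < k)%N -> (k <= n)%N -> ccw_angle c`_(k %% n) t < ccw_angle c`_0 t.
  elim: k => [//|[_ _ _|k IH _ lt_kn]]; first exact: dec 0%N n_gt0.
  apply: lt_trans (dec k.+1 lt_kn) _.
  by have := IH isT (ltnW lt_kn); rewrite modn_small.
by have := dec0 n n_gt0 (leqnn n); rewrite modnn ltxx.
Qed.

Lemma dcycle_regret_set P eps c : standing P -> 0 < eps < 1 ->
  distinct_angles P eps -> dcycle P eps c -> regret_set P c eps.
Proof.
move=> sP eps01 dP [c0 _ edges]; have /andP[_ eps_lt1] := eps01.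
apply/(regret_setP _ _ sP); split.
  move=> p pc; have lt_pc : (index p c < size c)%N by rewrite index_mem.
  by have [[+ _] _ _ _ _] := edges _ lt_pc; rewrite nth_index.
move=> y y_gt0; have Py_gt0 := standing_omega_gt0 sP y_gt0.
have [t [et Pt]] := extreme_argmax sP y_gt0; rewrite Pt in Py_gt0 *.
have [i lt_ic rt] : exists2 i, (i < size c)%N &
    ccw_angle c`_i t <= ccw_angle c`_i c`_(i.+1 %% size c).
  apply: ccw_cycle_cover => // i /edges[ca cb ab _ _].
  exact: candidate_ccw_angle_gt0 dP ca cb ab.
have eab := edges i lt_ic.
have lt_jc : (i.+1 %% size c < size c)%N by rewrite ltn_pmod // lt0n size_eq0.
move: eab rt (mem_nth 0 lt_ic) (mem_nth 0 lt_jc).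
set a := c`_i; set b := c`_(i.+1 %% size c) => eab rt ac bc.
have ab_gt0 := edge_cross_gt0 sP eps_lt1 dP eab.
have [ca cb _ _ _] := eab.
have [at_ge0 tb_ge0] := in_range_wedge sP (candidate_norm2_gt0 sP eps_lt1 ca)
  (candidate_norm2_gt0 sP eps_lt1 cb) ab_gt0 (conj et rt).
apply: (@dominated_le (cross a b) ((1 - eps) * cross t b) ((1 - eps) * cross a t)
  _ (dot a y) (dot b y)).
- exact: ab_gt0.
- by rewrite mulr_ge0 // subr_ge0 ltW.
- by rewrite mulr_ge0 // subr_ge0 ltW.
- by rewrite -mulrDr; apply: edge_wedge_weight eab (conj et rt).
- by rewrite mulrCA cone_dot; ring.
- by rewrite mulr_gt0 ?subr_gt0.
- exact: omega_ge.
- exact: omega_ge.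
Qed.

(** * Locally minimal regret sets are cycles of G *)

Lemma regret_set_rem_dominated P Q eps r u v (K l m : R) : standing P -> eps < 1 ->
  regret_set P Q eps -> u \in Q -> v \in Q -> u != r -> v != r ->
  0 < K -> 0 <= l -> 0 <= m -> l + m <= K ->
  (forall y, K * dot r y = l * dot u y + m * dot v y) ->
  regret_set P [seq p <- Q | p != r] eps.
Proof.
move=> sP eps_lt1 /(regret_setP _ _ sP)[QP covQ] uQ vQ ur vr K_gt0 l_ge0 m_ge0 lmK Kr.
apply/(regret_setP _ _ sP); split=> [p|y y_gt0].
  by rewrite mem_filter => /andP[_ /QP].
have Q0 : Q != [::] by apply: contraTneq uQ => ->.
have [p pQ Qp] := omega_mem y Q0.
apply: le_trans (covQ y y_gt0) _; rewrite Qp.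
have [pr|pr] := eqVneq p r; last by apply: omega_ge; rewrite mem_filter pr.
rewrite pr in Qp *; apply: (dominated_le K_gt0 l_ge0 m_ge0 lmK (Kr y)).
- rewrite -Qp; apply: lt_le_trans (covQ y y_gt0).
  by rewrite mulr_gt0 ?subr_gt0 ?standing_omega_gt0.
- by apply: omega_ge; rewrite mem_filter ur.
- by apply: omega_ge; rewrite mem_filter vr.
Qed.

Lemma slope_sector_lt (s1 s2 s r1 r2 r A B : R) : 0 < s1 -> 0 < s2 -> 0 < s ->
  s1 * r <= s * r1 -> s * r2 <= s2 * r ->
  s1 * A + r1 * B < 0 -> s2 * A + r2 * B < 0 -> s * A + r * B < 0.
Proof.
move=> s1_gt0 s2_gt0 s_gt0 le1 le2 f1 f2; have [B_ge0|B_lt0] := lerP 0 B.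
  rewrite -(pmulr_rlt0 _ s1_gt0).
  have : s1 * r * B <= s * r1 * B by rewrite ler_wpM2r.
  have : s * (s1 * A + r1 * B) < 0 by rewrite pmulr_rlt0.
  lra.
rewrite -(pmulr_rlt0 _ s2_gt0).
have : s2 * r * B <= s * r2 * B by rewrite ler_wnM2r // ltW.
have : s * (s2 * A + r2 * B) < 0 by rewrite pmulr_rlt0.
lra.
Qed.

(* In the coordinates (dot t w, cross t w) of the half-plane, dot v is affine in the
   slope cross t w / dot t w. *)
Lemma halfplane_sector_lt t v x1 x2 y : 0 < norm2 t ->
  0 < dot t x1 -> 0 < dot t x2 -> 0 < dot t y ->
  cross x1 y <= 0 -> 0 <= cross x2 y -> dot v x1 < 0 -> dot v x2 < 0 -> dot v y < 0.
Proof.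
move=> t_gt0 tx1_gt0 tx2_gt0 ty_gt0 x1y x2y vx1 vx2.
have lin w : norm2 t * dot v w = dot t w * dot v t + cross t w * cross t v.
  by rewrite /norm2 /dot /cross; ring.
have orient w w' : norm2 t * cross w w' = dot t w * cross t w' - dot t w' * cross t w.
  by rewrite /norm2 /dot /cross; ring.
rewrite -(pmulr_rlt0 _ t_gt0) lin.
apply: (@slope_sector_lt _ _ _ (cross t x1) (cross t x2) _ _ _ tx1_gt0 tx2_gt0 ty_gt0).
- by rewrite -subr_le0 -orient pmulr_rle0.
- by rewrite -subr_ge0 -orient pmulr_rge0.
- by rewrite -lin pmulr_rlt0.
- by rewrite -lin pmulr_rlt0.
Qed.

Lemma beaten_at_xstars_lt P eps q y : standing P -> distinct_angles P eps ->
  (forall t t' x, consecutive P t t' -> xstar t t' x -> dot q x < (1 - eps) * dot t x) ->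
  0 < norm2 y -> dot q y < (1 - eps) * omega y P.
Proof.
move=> sP dP beaten y_gt0; have Py_gt0 := standing_omega_gt0 sP y_gt0.
have [t [et Pt]] := extreme_argmax sP y_gt0; rewrite Pt in Py_gt0 *.
have [t' [succ tt'_gt0]] := extreme_succ sP dP et.
have [t'' [pred t''t_gt0]] := extreme_pred sP dP et.
have xs1 := xstar_edge_normal tt'_gt0; have [_ _ tx1_gt0] := xs1.
have xs2 := xstar_edge_normal t''t_gt0; have [_ e2 t''x2_gt0] := xs2.
have [k1 k1_gt0 cross1] := cross_edge_normal tt'_gt0.
have [k2 k2_gt0 cross2] := cross_edge_normal t''t_gt0.
have [_ [t'P _] _ _] := succ; have [[t''P _] _ _ _] := pred.
pose v : pt := (q.1 - (1 - eps) * t.1, q.2 - (1 - eps) * t.2).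
have dot_v w : dot v w = dot q w - (1 - eps) * dot t w by rewrite /dot /=; ring.
rewrite -subr_lt0 -dot_v.
apply: (@halfplane_sector_lt t v (edge_normal t t') (edge_normal t'' t) y).
- exact: extreme_norm2_gt0 sP et.
- exact: tx1_gt0.
- by rewrite -e2.
- exact: Py_gt0.
- by rewrite cross1 pmulr_rle0 // subr_le0 -Pt omega_ge.
- by rewrite cross2 pmulr_rge0 // subr_ge0 -Pt omega_ge.
- by rewrite dot_v subr_lt0; apply: beaten succ xs1.
- by rewrite dot_v subr_lt0 -e2; apply: beaten pred xs2.
Qed.

Lemma locally_minimal_candidate P Q eps q : standing P -> eps < 1 ->
  distinct_angles P eps -> locally_minimal P Q eps -> q \in Q -> candidate P eps q.
Proof.
move=> sP eps_lt1 dP [regQ minQ] qQ; have qP := regQ.1 q qQ.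
apply: contrapT => not_cand; apply: (minQ q qQ).
have beaten t t' x : consecutive P t t' -> xstar t t' x -> dot q x < (1 - eps) * dot t x.
  move=> tt' xs; rewrite ltNge; apply/negP => le_q; apply: not_cand.
  by split=> //; right; exists t, t', x.
have /(regret_setP _ _ sP)[QP covQ] := regQ.
apply/(regret_setP _ _ sP); split=> [p|y y_gt0].
  by rewrite mem_filter => /andP[_ /QP].
have Q0 : Q != [::] by apply: contraTneq qQ => ->.
have [p pQ Qp] := omega_mem y Q0.
have := covQ y y_gt0; rewrite Qp => le_p.
have [pq|pq] := eqVneq p q.
  by rewrite pq in le_p; have := beaten_at_xstars_lt sP dP beaten y_gt0; lra.
by apply: le_trans le_p _; apply: omega_ge; rewrite mem_filter pq.
Qed.

Lemma locally_minimal_tie_max P Q eps a b x : standing P -> eps < 1 ->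
  distinct_angles P eps -> locally_minimal P Q eps ->
  a \in Q -> b \in Q -> a != b -> 0 < cross a b ->
  (forall q, q \in Q -> q != a -> ccw_angle a b <= ccw_angle a q) ->
  dot a x = dot b x -> 0 < dot a x -> forall q, q \in Q -> dot q x <= dot a x.
Proof.
move=> sP eps_lt1 dP minQ aQ bQ ab ab_gt0 succ abx ax_gt0 q qQ.
rewrite leNgt; apply/negP => aq_lt; have [regQ notmin] := minQ.
have qa : q != a by apply: contraTneq aq_lt => ->; rewrite ltxx.
have qb : q != b by apply: contraTneq aq_lt => ->; rewrite abx ltxx.
have lt_sum : cross a b < cross q b + cross a q.
  have : cross a b * dot a x < cross a b * dot q x by rewrite ltr_pM2l.
  by rewrite (cone_dot a b q x) -abx -mulrDl ltr_pM2r.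
have [qb_lt0|qb_ge0] := ltrP (cross q b) 0.
  apply: (notmin b bQ).
  apply: (@regret_set_rem_dominated _ _ _ b q a (cross a q) (cross a b) (- cross q b));
    rewrite // 1?eq_sym //; try lra.
  by move=> y; rewrite (cone_dot a b q y); ring.
have [aq_lt0|aq_ge0] := ltrP (cross a q) 0.
  apply: (notmin a aQ).
  apply: (@regret_set_rem_dominated _ _ _ a q b (cross q b) (cross a b) (- cross a q));
    rewrite // 1?eq_sym //; try lra.
  by move=> y; rewrite (cone_dot a b q y); ring.
have cand := locally_minimal_candidate sP eps_lt1 dP minQ.
have a_gt0 := candidate_norm2_gt0 sP eps_lt1 (cand a aQ).
have b_gt0 := candidate_norm2_gt0 sP eps_lt1 (cand b bQ).
have q_gt0 := candidate_norm2_gt0 sP eps_lt1 (cand q qQ).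
have ccw_eq : ccw_angle a q = ccw_angle a b.
  apply/eqP; rewrite eq_le succ // andbT.
  exact/(ccw_angle_le_wedge a_gt0 b_gt0 q_gt0 ab_gt0).
by have := dP q b (cand q qQ) (cand b bQ) qb; rewrite (ccw_angle_inj ccw_eq) eqxx.
Qed.

Lemma locally_minimal_edge P Q eps a b : standing P -> 0 < eps < 1 ->
  distinct_angles P eps -> locally_minimal P Q eps -> a \in Q -> b \in Q -> a != b ->
  (forall q, q \in Q -> q != a -> ccw_angle a b <= ccw_angle a q) -> edge P eps a b.
Proof.
move=> sP /andP[eps_gt0 eps_lt1] dP minQ aQ bQ ab succ.
have cand := locally_minimal_candidate sP eps_lt1 dP minQ.
have a_gt0 := candidate_norm2_gt0 sP eps_lt1 (cand a aQ).
have b_gt0 := candidate_norm2_gt0 sP eps_lt1 (cand b bQ).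
have ab_lt : ccw_angle a b < pi.
  have [p pQ ap_gt0] := regret_set_left sP eps_lt1 minQ.1 a_gt0.
  apply: le_lt_trans (succ p pQ _) _; first by rewrite eq_sym cross_gt0_neq.
  have p_gt0 := candidate_norm2_gt0 sP eps_lt1 (cand p pQ).
  by have /andP[] := (cross_gt0_ccw a_gt0 p_gt0).1 ap_gt0.
have ab_gt0 : 0 < cross a b.
  apply/(cross_gt0_ccw a_gt0 b_gt0).
  by rewrite ab_lt (candidate_ccw_angle_gt0 dP (cand a aQ) (cand b bQ) ab).
have [xu abx ax_gt0] := xstar_edge_normal ab_gt0.
split=> //; [exact: cand aQ | exact: cand bQ |].
exists (edge_normal a b); split=> //; first exact: ltW.
apply/(lij_le _ _ _ _ (ltW eps_gt0)) => t rt; set x := edge_normal a b in xu abx ax_gt0 *.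
have [at_ge0 tb_ge0] := in_range_wedge sP a_gt0 b_gt0 ab_gt0 rt.
have t_gt0 := extreme_norm2_gt0 sP rt.1.
rewrite one_sub_div_le ?(wedge_dot_gt0 ab_gt0 t_gt0 at_ge0 tb_ge0 abx ax_gt0) //.
have Qx_le : omega x Q <= dot a x.
  have [|q qQ ->] := omega_mem x (Q := Q); first by apply: contraTneq aQ => ->.
  exact: locally_minimal_tie_max sP eps_lt1 dP minQ aQ bQ ab ab_gt0 succ abx ax_gt0 q qQ.
have /(regret_setP _ _ sP)[_ covQ] := minQ.1.
have x_gt0 : 0 < norm2 x by rewrite /norm2 xu.
apply: le_trans Qx_le; apply: le_trans (covQ _ x_gt0).
apply: ler_wpM2l; first by rewrite subr_ge0 ltW.
by apply: omega_ge; case: rt => -[].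
Qed.

Lemma ccw_next_le c i j : sorted [rel p q : pt | polar_angle p < polar_angle q] c ->
  (i < size c)%N -> (j < size c)%N -> j != i ->
  ccw_angle c`_i c`_(i.+1 %% size c) <= ccw_angle c`_i c`_j.
Proof.
move=> c_sorted lt_ic lt_jc ji.
have tr : transitive [rel p q : pt | polar_angle p < polar_angle q].
  by move=> ? ? ?; apply: lt_trans.
have mono k l : (k < l)%N -> (l < size c)%N -> polar_angle c`_k < polar_angle c`_l.
  by move=> lt_kl lt_lc; apply: (sorted_ltn_nth tr 0 c_sorted);
  rewrite ?inE ?(ltn_trans lt_kl lt_lc).
have mono_le k l : (k <= l)%N -> (l < size c)%N -> polar_angle c`_k <= polar_angle c`_l.
  by rewrite leq_eqVlt => /orP[/eqP->|/mono lt_kl /lt_kl/ltW].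
have [? ?] := polar_angle_bounds c`_i; have [? ?] := polar_angle_bounds c`_j.
set k := (i.+1 %% size c)%N; have [? ?] := polar_angle_bounds c`_k.
have [lt_ij|lt_ji|eq_ij] := ltngtP i j; last by rewrite eq_ij eqxx in ji.
  have ek : k = i.+1 by rewrite /k modn_small // (leq_ltn_trans lt_ij lt_jc).
  have := mono _ _ (ltnSn i) (leq_ltn_trans lt_ij lt_jc).
  have := mono_le _ _ lt_ij lt_jc; rewrite -ek.
  move: (ccw_angle_cases c`_i c`_k) (ccw_angle_cases c`_i c`_j).
  by move=> [[? ->]|[? ->]] [[? ->]|[? ->]]; lra.
have := mono _ _ lt_ji lt_ic; have [lt_i1|le_i1] := ltnP i.+1 (size c).
  have ek : k = i.+1 by rewrite /k modn_small.
  have := mono _ _ (ltnSn i) lt_i1; rewrite -ek.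
  move: (ccw_angle_cases c`_i c`_k) (ccw_angle_cases c`_i c`_j).
  by move=> [[? ->]|[? ->]] [[? ->]|[? ->]]; lra.
have ek : k = 0%N.
  by rewrite /k (_ : i.+1 = size c) ?modnn //; apply/eqP; rewrite eqn_leq lt_ic.
have := mono_le _ _ (leq0n j) lt_jc; rewrite -ek.
move: (ccw_angle_cases c`_i c`_k) (ccw_angle_cases c`_i c`_j).
by move=> [[? ->]|[? ->]] [[? ->]|[? ->]]; lra.
Qed.

Lemma sort_polar_angle_lt (s : seq pt) : uniq s -> {in s &, injective (@polar_angle R)} ->
  sorted [rel p q : pt | polar_angle p < polar_angle q]
    (sort [rel p q : pt | polar_angle p <= polar_angle q] s).
Proof.
move=> s_uniq pa_inj; set c := sort _ s.
have c_inj : {in c &, injective (@polar_angle R)}.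
  by move=> p q; rewrite !mem_sort; apply: pa_inj.
have : sorted <%R (map (@polar_angle R) c).
  rewrite lt_sorted_uniq_le map_inj_in_uniq // sort_uniq s_uniq sorted_map /c.
  by apply: sort_sorted => p q; apply: le_total.
by rewrite sorted_map.
Qed.

Lemma succ_modn_neq i n : (1 < n)%N -> (i < n)%N -> (i.+1 %% n != i)%N.
Proof.
move=> n_gt1 lt_in; have [lt_i1n|le_ni1] := ltnP i.+1 n.
  by rewrite modn_small // gtn_eqF.
have e : i.+1 = n by apply/eqP; rewrite eqn_leq lt_in le_ni1.
by rewrite e modnn eq_sym -lt0n -ltnS e.
Qed.

Lemma locally_minimal_dcycle P Q eps : standing P -> 0 < eps < 1 ->
  distinct_angles P eps -> locally_minimal P Q eps -> exists c, dcycle P eps c /\ c =i Q.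
Proof.
move=> sP eps01 dP minQ; have /andP[_ eps_lt1] := eps01.
have cand := locally_minimal_candidate sP eps_lt1 dP minQ.
pose c := sort [rel p q : pt | polar_angle p <= polar_angle q] (undup Q).
have cQ : c =i Q by move=> p; rewrite mem_sort mem_undup.
have c_uniq : uniq c by rewrite sort_uniq undup_uniq.
have c_sorted : sorted [rel p q : pt | polar_angle p < polar_angle q] c.
  apply: sort_polar_angle_lt; first exact: undup_uniq.
  move=> p q; rewrite !mem_undup => pQ qQ e; have [//|pq] := eqVneq p q.
  by move: (dP _ _ (cand p pQ) (cand q qQ) pq); rewrite e eqxx.
have [a aQ] : exists a, a \in Q.
  have z_gt0 : 0 < norm2 (1, 0) by rewrite /norm2 /= expr1n expr0n addr0 ltr01.
  by have [a aQ _] := regret_set_dot_gt0 sP eps_lt1 minQ.1 z_gt0; exists a.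
have size_gt1 : (1 < size c)%N.
  have a_gt0 := candidate_norm2_gt0 sP eps_lt1 (cand a aQ).
  have [p pQ /cross_gt0_neq ap] := regret_set_left sP eps_lt1 minQ.1 a_gt0.
  rewrite -(cQ a) in aQ; rewrite -(cQ p) in pQ.
  apply: (@uniq_leq_size _ [:: a; p]); first by rewrite /= inE ap.
  by move=> r; rewrite !inE => /orP[] /eqP->.
exists c; split=> //; split=> //; first by rewrite -size_eq0 -lt0n ltnW.
move=> i lt_ic; have lt_kc : (i.+1 %% size c < size c)%N by rewrite ltn_pmod // ltnW.
apply: (locally_minimal_edge (Q := Q)); rewrite -?cQ ?mem_nth //.
  by rewrite nth_uniq // eq_sym succ_modn_neq.
move=> q; rewrite -cQ => qc qa.
rewrite -(nth_index 0 qc); apply: ccw_next_le; rewrite ?index_mem //.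
by apply: contraNneq qa => <-; rewrite nth_index.
Qed.

End RegretCycles.

Theorem lemma3 (R : realType) (P : seq (R * R)) (eps : R) :
  standing P -> 0 < eps < 1 -> distinct_angles P eps ->
  (forall c, dcycle P eps c -> regret_set P c eps) /\
  (forall Q, locally_minimal P Q eps ->
     exists c, dcycle P eps c /\ c =i Q).
Proof.
move=> sP eps01 dP; split=> [c|Q].
  exact: dcycle_regret_set.
exact: locally_minimal_dcycle.
Qed.
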